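(* Let $R$ be a commutative ring, $n\ge 2$ an integer, and $S=\{m_1,\dots,m_n\}\subseteq R\setminus(\{0\}\cup R^\times)$ a set of $n$ pairwise coprime non-zero non-units, and $m=m_1m_2\cdots m_n$. Let $V$ be the set of perfect divisors of $m$ with respect to $S$, and define $\le$ on $V$ by $a\le b$ iff $a=b$ or $a\mid b$. Then $(V,\le)$ is a partially ordered set of cardinality $|V|=2^n-2$, and the perfect divisor graph $\mathrm{pdg}(S)$ is a partial order graph.
   Context: Rings have $1\neq 0$; $R^\times$ is the unit group. Elements $a,b$ are coprime if $ra+sb=1$ for some $r,s\in R$. A perfect divisor of $m$ with respect to $S$ is an element $d\neq m$ that is a product of distinct elements of $S$ (a product $\prod_{j\in J} m_j$ with $\emptyset\neq J\subseteq\{1,\dots,n\}$). The perfect divisor graph $\mathrm{pdg}(S)$ is the simple undirected graph whose vertex set is the set of perfect divisors of $m$ with respect to $S$, two distinct vertices $a,b$ being adjacent iff $a\mid b$ or $b\mid a$. A partial order graph is a graph of the form $G_A$ for a poset $(A,\le)$: vertex set $A$, distinct $a,b$ adjacent iff $a\le b$ or $b\le a$. *)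

From mathcomp Require Import all_boot all_algebra.
Set Implicit Arguments. Unset Strict Implicit. Unset Printing Implicit Defensive.
Import GRing.Theory.
Local Open Scope ring_scope.

Definition rdvd (R : comNzRingType) (a b : R) : Prop := exists c : R, b = c * a.

Definition runit (R : comNzRingType) (a : R) : Prop := exists u : R, a * u = 1.

Definition rcoprime (R : comNzRingType) (a b : R) : Prop :=
  exists r s : R, r * a + s * b = 1.

Definition mprod (R : comNzRingType) (n : nat) (ms : 'I_n -> R) : R :=
  \prod_(j < n) ms j.

Definition perfect_divisor (R : comNzRingType) (n : nat) (ms : 'I_n -> R)
  (d : R) : Prop :=
  d <> mprod ms /\ exists J : {set 'I_n}, J != set0 /\ d = \prod_(j in J) ms j.

Definition pd_le (R : comNzRingType) (a b : R) : Prop := a = b \/ rdvd a b.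

Definition is_poset (T : Type) (V : T -> Prop) (le : T -> T -> Prop) : Prop :=
  (forall a, V a -> le a a) /\
  (forall a b, V a -> V b -> le a b -> le b a -> a = b) /\
  (forall a b c, V a -> V b -> V c -> le a b -> le b c -> le a c).

Definition pdg_adj (R : comNzRingType) (a b : R) : Prop :=
  a <> b /\ (rdvd a b \/ rdvd b a).

Definition is_partial_order_graph (T : Type) (V : T -> Prop)
  (adj : T -> T -> Prop) : Prop :=
  exists le : T -> T -> Prop, is_poset V le /\
    (forall a b, V a -> V b -> (adj a b <-> (a <> b /\ (le a b \/ le b a)))).

From mathcomp Require Import all_boot all_algebra.
From mathcomp Require Import ring.
Set Implicit Arguments. Unset Strict Implicit. Unset Printing Implicit Defensive.
Import GRing.Theory.
Local Open Scope ring_scope.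

(* Every perfect divisor is m_J = prod_(j in J) m_j for a nonempty proper
   J, and J is recovered from m_J: if i is in J but not in K, then m_i is
   coprime to m_K, so m_J | m_K would make m_i a divisor of an element it is
   coprime to, i.e. a unit.  Hence m_J | m_K forces J to be a subset of K,
   which makes divisibility antisymmetric on V and J |-> m_J a bijection from
   the 2^n - 2 nonempty proper subsets onto V. *)

Definition nontrivial_subsets (T : finType) : {set {set T}} :=
  [set J : {set T} | J != set0 & J != setT].

Lemma card_nontrivial_subsets (T : finType) :
  (0 < #|T|)%N -> #|nontrivial_subsets T| = (2 ^ #|T| - 2)%N.
Proof.
move=> /card_gt0P [x _].
have setT_neq0 : [set: T] != set0 by apply/set0Pn; exists x; rewrite inE.
rewrite -cardsT -card_powerset powersetT (cardsD1 set0 setT).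
rewrite (cardsD1 setT (setT :\ set0)) !inE setT_neq0 add1n addSn subn2 /=.
by apply: eq_card => J; rewrite !inE andbT andbC.
Qed.

Section Divisibility.
Variable R : comNzRingType.

Lemma rdvd_trans (a b c : R) : rdvd a b -> rdvd b c -> rdvd a c.
Proof. by move=> [x ->] [y ->]; exists (y * x); rewrite mulrA. Qed.

Lemma rcoprimer1 (a : R) : rcoprime a 1.
Proof. by exists 0, 1; rewrite mul0r add0r mulr1. Qed.

Lemma rcoprimerM (a b c : R) :
  rcoprime a b -> rcoprime a c -> rcoprime a (b * c).
Proof.
move=> [r [s rs1]] [r' [s' rs'1]].
exists (r * r' * a + r * s' * c + s * b * r'), (s * s').
have -> : 1 = (r * a + s * b) * (r' * a + s' * c) by rewrite rs1 rs'1 mulr1.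
ring.
Qed.

Lemma rcoprime_rdvd_runit (a b : R) : rcoprime a b -> rdvd a b -> runit a.
Proof.
move=> [r [s rs1]] [c bE]; exists (r + s * c).
by rewrite -rs1 bE; ring.
Qed.

Lemma pd_le_poset (V : R -> Prop) :
  (forall a b, V a -> V b -> rdvd a b -> rdvd b a -> a = b) ->
  is_poset V (@pd_le R).
Proof.
move=> rdvd_anti; split; first by move=> a _; left.
split; first by move=> a b Va Vb [//|ab] [//|ba]; apply: rdvd_anti.
move=> a b c _ _ _ [-> //|ab] [<-|bc]; right=> //.
exact: rdvd_trans bc.
Qed.

Lemma pdg_adjE (a b : R) :
  pdg_adj a b <-> a <> b /\ (pd_le a b \/ pd_le b a).
Proof.
split=> [[ab [dvd|dvd]]|[ab [[/ab|dvd]|[/esym/ab|dvd]]]] //.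
- by split=> //; left; right.
- by split=> //; right; right.
- by split=> //; left.
- by split=> //; right.
Qed.

Lemma pdg_partial_order_graph (V : R -> Prop) :
  is_poset V (@pd_le R) -> is_partial_order_graph V (@pdg_adj R).
Proof. by move=> poset; exists (@pd_le R); split=> // a b _ _; apply: pdg_adjE. Qed.

End Divisibility.

Section SubsetProducts.
Variables (R : comNzRingType) (n : nat) (ms : 'I_n -> R).
Hypothesis ms_nonunit : forall i, ~ runit (ms i).
Hypothesis ms_coprime : forall i j, i <> j -> rcoprime (ms i) (ms j).

Definition subset_prod (J : {set 'I_n}) : R := \prod_(j in J) ms j.

Lemma rcoprime_subset_prod i (J : {set 'I_n}) : i \notin J -> rcoprime (ms i) (subset_prod J).
Proof.
move=> iNJ; apply: (big_ind (rcoprime (ms i))).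
- exact: rcoprimer1.
- exact: rcoprimerM.
- by move=> j jJ; apply: ms_coprime => ij; rewrite ij jJ in iNJ.
Qed.

Lemma rdvd_subset_prod_subset (J K : {set 'I_n}) :
  rdvd (subset_prod J) (subset_prod K) -> J \subset K.
Proof.
move=> JK; apply/subsetP => i iJ; apply/negPn/negP => iNK.
apply: (ms_nonunit (i := i)); apply: rcoprime_rdvd_runit.
  exact: rcoprime_subset_prod iNK.
apply: rdvd_trans JK.
by exists (\prod_(j in J | j != i) ms j); rewrite /subset_prod (bigD1 i iJ) mulrC.
Qed.

Lemma subset_prod_inj : injective subset_prod.
Proof.
move=> J K JK; apply/eqP; rewrite eqEsubset.
by rewrite !rdvd_subset_prod_subset //; exists 1; rewrite mul1r JK.
Qed.

Lemma mprod_subset_prod : mprod ms = subset_prod setT.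
Proof. by apply: eq_bigl => j; rewrite in_setT. Qed.

Lemma perfect_divisorP d :
  perfect_divisor ms d <->
  exists2 J, J \in nontrivial_subsets 'I_n & d = subset_prod J.
Proof.
rewrite /perfect_divisor mprod_subset_prod; split.
  move=> [dNm [J [J0 dE]]]; exists J => //.
  by rewrite inE J0; apply/eqP => JT; apply: dNm; rewrite dE JT.
move=> [J]; rewrite inE => /andP [J0 JNT] ->; split; last by exists J.
by move/subset_prod_inj/eqP; apply/negP.
Qed.

Lemma perfect_divisor_rdvd_anti a b :
  perfect_divisor ms a -> perfect_divisor ms b ->
  rdvd a b -> rdvd b a -> a = b.
Proof.
move=> /perfect_divisorP [J _ ->] /perfect_divisorP [K _ ->] JK KJ.
apply: f_equal; apply/eqP; rewrite eqEsubset.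
by rewrite !rdvd_subset_prod_subset.
Qed.

Lemma perfect_divisor_enum :
  (0 < n)%N ->
  exists s : seq R, uniq s /\ size s = (2 ^ n - 2)%N /\
    forall d, d \in s <-> perfect_divisor ms d.
Proof.
move=> n_gt0; exists (map subset_prod (enum (nontrivial_subsets 'I_n))).
split; first by rewrite (map_inj_uniq subset_prod_inj) enum_uniq.
split; first by rewrite size_map -cardE card_nontrivial_subsets card_ord.
move=> d; rewrite perfect_divisorP; split.
  by move=> /mapP [J]; rewrite mem_enum; exists J.
by move=> [J JV ->]; apply: map_f; rewrite mem_enum.
Qed.

End SubsetProducts.

Theorem lemma3p2 (R : comNzRingType) (n : nat) (ms : 'I_n -> R)
  (hn : (2 <= n)%N)
  (hinj : injective ms)
  (hnz : forall i, ms i <> 0)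
  (hnu : forall i, ~ runit (ms i))
  (hcop : forall i j, i <> j -> rcoprime (ms i) (ms j)) :
  is_poset (perfect_divisor ms) (@pd_le R) /\
  (exists s : seq R, uniq s /\ size s = (2 ^ n - 2)%N /\
     forall d, d \in s <-> perfect_divisor ms d) /\
  is_partial_order_graph (perfect_divisor ms) (@pdg_adj R).
Proof.
have poset : is_poset (perfect_divisor ms) (@pd_le R).
  exact/pd_le_poset/(perfect_divisor_rdvd_anti hnu hcop).
split=> //; split; last exact: pdg_partial_order_graph.
exact/(perfect_divisor_enum hnu hcop)/(leq_trans _ hn).
Qed.
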